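(* Let $(\Omega,\mu)$ be a measure space and let $Y$ be a uniformly monotone Banach function space on $(\Omega,\mu)$, with $\delta$ a function witnessing uniform monotonicity of $Y$. Let $0<\varepsilon<1$. Assume that $f_1$ and $f_2$ are positive elements of $Y$ such that $$\Vert f_1+f_2\Vert\le 1 \quad\text{and}\quad \frac{1}{1+\delta(\varepsilon/3)}\le \Vert f_1-f_2\Vert.$$ Then there are two positive functions $h_1,h_2\in Y$ with disjoint supports such that $\Vert h_1+h_2\Vert=1$ and $\Vert h_i-f_i\Vert<\varepsilon$ for $i=1,2$.
   Context: Let $L^0(\mu)$ denote the space of ($\mu$-a.e. equivalence classes of) real valued measurable functions on $\Omega$. A Banach space $X$ is a Banach function space on $(\Omega,\mu)$ if $X$ is an ideal in $L^0(\mu)$ and whenever $x,y\in X$ with $|x|\le|y|$ a.e., then $\Vert x\Vert\le\Vert y\Vert$. A Banach lattice $E$ is uniformly monotone if for every $\varepsilon>0$ there is $\delta(\varepsilon)>0$ such that whenever $x\in E$ with $\Vert x\Vert=1$, $y\in E$, $x,y\ge 0$, the condition $\Vert x+y\Vert\le 1+\delta(\varepsilon)$ implies $\Vert y\Vert\le\varepsilon$; such a function $\delta$ is said to witness (be a modulus of) uniform monotonicity. All spaces are real. *)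

From HB Require Import structures.
From mathcomp Require Import all_boot all_order all_algebra.
From mathcomp Require Import all_classical all_reals all_analysis.
Set Implicit Arguments. Unset Strict Implicit. Unset Printing Implicit Defensive.
Import Order.TTheory GRing.Theory Num.Theory.
Local Open Scope classical_set_scope.
Local Open Scope ring_scope.

Section BFS.
Context {d : measure_display} {T : measurableType d} {R : realType}.
Variable mu : {measure set T -> \bar R}.

(* Elements of L^0(mu) are represented by measurable functions T -> R;
   everything below is invariant under mu-a.e. equality. *)
Definition fadd (f g : T -> R) : T -> R := fun x => f x + g x.
Definition fsub (f g : T -> R) : T -> R := fun x => f x - g x.
Definition fscale (c : R) (f : T -> R) : T -> R := fun x => c * f x.
Definition fzero : T -> R := fun _ => 0.

Definition ae_nonneg (f : T -> R) : Prop := {ae mu, forall x, 0 <= f x}.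

Definition is_BFS (X : set (T -> R)) (N : (T -> R) -> R) : Prop :=
  [/\ (forall f : T -> R, X f -> measurable_fun setT f),
      X fzero /\ (forall f g, X f -> X g -> X (fadd f g)) /\
        (forall c f, X f -> X (fscale c f)),
      (forall f g : T -> R, measurable_fun setT f -> X g ->
         {ae mu, forall x, `|f x| <= `|g x|} -> X f),
      [/\ (forall f, X f -> (N f = 0 <-> {ae mu, forall x, f x = 0})),
          (forall f g, X f -> X g -> N (fadd f g) <= N f + N g),
          (forall c f, X f -> N (fscale c f) = `|c| * N f) &
          (forall f g, X f -> X g -> {ae mu, forall x, `|f x| <= `|g x|} ->
             N f <= N g)] &
      (forall u : nat -> T -> R, (forall n, X (u n)) ->
         (forall e, 0 < e -> exists M, forall m n, (M <= m)%N -> (M <= n)%N ->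
            N (fsub (u m) (u n)) < e) ->
         exists f, X f /\ forall e, 0 < e -> exists M, forall n, (M <= n)%N ->
            N (fsub (u n) f) < e)].

Definition unif_monotone_modulus (X : set (T -> R)) (N : (T -> R) -> R)
    (delta : R -> R) : Prop :=
  forall eps, 0 < eps -> 0 < delta eps /\
    forall x y, X x -> X y -> ae_nonneg x -> ae_nonneg y -> N x = 1 ->
      N (fadd x y) <= 1 + delta eps -> N y <= eps.

End BFS.

From HB Require Import structures.
From mathcomp Require Import all_boot all_order all_algebra.
From mathcomp Require Import all_classical all_reals all_analysis.
From mathcomp Require Import measurable_realfun lra.
Import Order.TTheory GRing.Theory Num.Theory.
Local Open Scope classical_set_scope.
Local Open Scope ring_scope.

(* Write f1 = u + g and f2 = v + g, where u = (f1 - f2)^+ and v = (f1 - f2)^-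
   are disjoint and g = f1 /\ f2 >= 0, and take h1 = u / a, h2 = v / a with
   a = ||f1 - f2|| = ||u + v||, so that ||h1 + h2|| = 1.  Uniform monotonicity,
   applied at the unit vector (u + v) / a, first gives delta(eps/3) <= eps/3, so
   a >= 1 / (1 + delta(eps/3)) is close to 1; applied to
   (f1 + f2) / a = (u + v) / a + 2 g / a, whose norm is at most
   1 / a <= 1 + delta(eps/3), it shows that g is small.  Finally
   ||h1 - f1|| <= (1/a - 1) ||u|| + ||g|| <= (1 - a) + ||g|| < eps. *)

Lemma funrpos_funrneg_disjoint {T : Type} {R : realDomainType} (f : T -> R) x :
  f^\+ x = 0 \/ f^\- x = 0.
Proof.
rewrite /funrpos /funrneg; have [_|fx_gt0] := leP (f x) 0; [by left | right].
by apply/max_idPr; rewrite oppr_le0 ltW.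
Qed.

Lemma normr_funrpos_le {T : Type} {R : realDomainType} (f : T -> R) x :
  `|f^\+ x| <= `|f x|.
Proof. by rewrite /funrpos; case: (leP (f x) 0); rewrite ?normr0. Qed.

Lemma normr_funrneg_le {T : Type} {R : realDomainType} (f : T -> R) x :
  `|f^\- x| <= `|f x|.
Proof. by rewrite /funrneg; case: (leP (- f x) 0); rewrite ?normr0 ?normrN. Qed.

Section BanachFunctionSpace.
Context {d : measure_display} {T : measurableType d} {R : realType}.
Context {mu : {measure set T -> \bar R}} {X : set (T -> R)} {N : (T -> R) -> R}.
Implicit Types (f g : T -> R) (c eps : R).

Lemma fsubE f g : fsub f g = fadd f (fscale (-1) g).
Proof. by apply/funext => x; rewrite /fsub /fadd /fscale mulN1r. Qed.

Lemma funrpos_sub_add_min f g x :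
  (fsub f g)^\+ x + (f \min g) x = f x.
Proof.
rewrite /funrpos /fsub /=; case: (leP (f x - g x) 0); rewrite ?subr_le0 ?subr_gt0.
  by move=> fg; rewrite (min_idPl fg) add0r.
by move=> /ltW gf; rewrite (min_idPr gf) subrK.
Qed.

Lemma funrneg_sub_add_min f g x :
  (fsub f g)^\- x + (f \min g) x = g x.
Proof.
rewrite /funrneg /fsub /= opprB; case: (leP (g x - f x) 0); rewrite ?subr_le0 ?subr_gt0.
  by move=> gf; rewrite (min_idPr gf) add0r.
by move=> /ltW fg; rewrite (min_idPl fg) subrK.
Qed.

Hypothesis XN : is_BFS mu X N.


Lemma BFS_measurable {f} : X f -> measurable_fun setT f.
Proof. by case: XN => mX _ _ _ _; apply: mX. Qed.

Lemma BFS_add {f g} : X f -> X g -> X (fadd f g).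
Proof. by case: XN => _ [_ [XD _]] _ _ _; apply: XD. Qed.

Lemma BFS_scale c {f} : X f -> X (fscale c f).
Proof. by case: XN => _ [_ [_ XZ]] _ _ _; apply: XZ. Qed.

Lemma BFS_sub {f g} : X f -> X g -> X (fsub f g).
Proof. by move=> Xf Xg; rewrite fsubE; apply/BFS_add/BFS_scale. Qed.

Lemma BFS_ideal {f g} : measurable_fun setT f -> X g ->
  (forall x, `|f x| <= `|g x|) -> X f.
Proof. by case: XN => _ _ ideal _ _ mf Xg fg; apply: ideal mf Xg (aeW _ fg). Qed.

Lemma BFS_normD {f g} : X f -> X g -> N (fadd f g) <= N f + N g.
Proof. by case: XN => _ _ _ [_ ND _ _] _; apply: ND. Qed.

Lemma BFS_normZ c {f} : X f -> N (fscale c f) = `|c| * N f.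
Proof. by case: XN => _ _ _ [_ _ NZ _] _; apply: NZ. Qed.

Lemma BFS_norm_le_ae {f g} : X f -> X g -> {ae mu, forall x, `|f x| <= `|g x|} ->
  N f <= N g.
Proof. by case: XN => _ _ _ [_ _ _ Nmono] _; apply: Nmono. Qed.

Lemma BFS_norm_le {f g} : X f -> X g -> (forall x, `|f x| <= `|g x|) -> N f <= N g.
Proof. by move=> Xf Xg fg; apply: BFS_norm_le_ae => //; apply: aeW. Qed.

Lemma BFS_normB_le {f g} : X f -> X g -> N (fsub f g) <= N f + N g.
Proof.
move=> Xf Xg; rewrite fsubE.
apply: (le_trans (BFS_normD Xf (BFS_scale _ Xg))).
by rewrite BFS_normZ // normrN1 mul1r.
Qed.

Lemma BFS_funrpos {f} : X f -> X f^\+.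
Proof.
move=> Xf; apply: (BFS_ideal _ Xf (normr_funrpos_le f)).
exact/measurable_funrpos/BFS_measurable.
Qed.

Lemma BFS_funrneg {f} : X f -> X f^\-.
Proof.
move=> Xf; apply: (BFS_ideal _ Xf (normr_funrneg_le f)).
exact/measurable_funrneg/BFS_measurable.
Qed.

Lemma BFS_norm_funrposDneg {f} : X f -> N (fadd f^\+ f^\-) = N f.
Proof.
move=> Xf; have Xpn := BFS_add (BFS_funrpos Xf) (BFS_funrneg Xf).
have pnE x : fadd f^\+ f^\- x = `|f x| := congr1 (@^~ x) (funrposDneg f).
by apply/eqP; rewrite eq_le !BFS_norm_le // => x; rewrite pnE normr_id.
Qed.

Lemma BFS_norm_funrpos_le {f} : X f -> N f^\+ <= N f.
Proof.
by move=> Xf; apply: BFS_norm_le (BFS_funrpos Xf) Xf (normr_funrpos_le f).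
Qed.

Lemma BFS_norm_funrneg_le {f} : X f -> N f^\- <= N f.
Proof.
by move=> Xf; apply: BFS_norm_le (BFS_funrneg Xf) Xf (normr_funrneg_le f).
Qed.

Lemma BFS_min {f g} : X f -> X g -> X (f \min g).
Proof.
move=> Xf Xg; have -> : f \min g = fsub f (fsub f g)^\+.
  by apply/funext => x; rewrite /fsub -(funrpos_sub_add_min f g x) addrC addKr.
exact/BFS_sub/BFS_funrpos/BFS_sub.
Qed.

Lemma ae_nonneg_min {f g} :
  ae_nonneg mu f -> ae_nonneg mu g -> ae_nonneg mu (f \min g).
Proof.
by move=> f_ge0 g_ge0; apply: filterS2 f_ge0 g_ge0 => x fx gx; rewrite le_min fx.
Qed.

Lemma BFS_normB_le_normD {f g} : X f -> X g -> ae_nonneg mu f -> ae_nonneg mu g ->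
  N (fsub f g) <= N (fadd f g).
Proof.
move=> Xf Xg f_ge0 g_ge0; apply: BFS_norm_le_ae (BFS_sub Xf Xg) (BFS_add Xf Xg) _.
apply: filterS2 f_ge0 g_ge0 => x fx_ge0 gx_ge0.
by rewrite /fsub /fadd [`|f x + g x|]ger0_norm ?addr_ge0 // ler_norml; lra.
Qed.

Lemma BFS_norm_scaleB c {f g} : X f -> X g ->
  N (fsub (fscale c f) (fadd f g)) <= `|c - 1| * N f + N g.
Proof.
move=> Xf Xg; have -> : fsub (fscale c f) (fadd f g) = fsub (fscale (c - 1) f) g.
  by apply/funext => x; rewrite /fsub /fscale /fadd; lra.
by rewrite -BFS_normZ //; apply/BFS_normB_le/Xg/BFS_scale.
Qed.

Context {delta : R -> R}.
Hypothesis UM : unif_monotone_modulus mu X N delta.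

(* Uniform monotonicity applied to the normalised vectors f / N f and g / N f. *)
Lemma unif_monotone_homogeneous {eps f g} : 0 < eps ->
  X f -> X g -> ae_nonneg mu f -> ae_nonneg mu g -> 0 < N f ->
  N (fadd f g) <= (1 + delta eps) * N f -> N g <= eps * N f.
Proof.
move=> eps_gt0 Xf Xg f_ge0 g_ge0 Nf_gt0 Nfg.
have c_gt0 : 0 < (N f)^-1 by rewrite invr_gt0.
have scale_ge0 h : ae_nonneg mu h -> ae_nonneg mu (fscale (N f)^-1 h).
  by apply: filterS => t ht; rewrite /fscale mulr_ge0 // ltW.
have := (UM _ eps_gt0).2 _ _ (BFS_scale _ Xf) (BFS_scale _ Xg)
  (scale_ge0 _ f_ge0) (scale_ge0 _ g_ge0).
have -> : fadd (fscale (N f)^-1 f) (fscale (N f)^-1 g) = fscale (N f)^-1 (fadd f g).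
  by apply/funext => t; rewrite /fadd /fscale mulrDr.
rewrite !BFS_normZ //; last exact: BFS_add.
rewrite gtr0_norm // mulVf ?gt_eqF // => /(_ erefl).
by rewrite ![(N f)^-1 * _]mulrC !ler_pdivrMr //; apply.
Qed.

Lemma unif_monotone_modulus_le {eps f} :
  0 < eps -> X f -> ae_nonneg mu f -> 0 < N f -> delta eps <= eps.
Proof.
move=> eps_gt0 Xf f_ge0 Nf_gt0.
have delta_ge0 : 0 <= delta eps by apply/ltW; case: (UM _ eps_gt0).
have Xdf := BFS_scale (delta eps) Xf.
have df_ge0 : ae_nonneg mu (fscale (delta eps) f).
  by apply: filterS f_ge0 => t ft; rewrite /fscale mulr_ge0.
have := unif_monotone_homogeneous eps_gt0 Xf Xdf f_ge0 df_ge0 Nf_gt0.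
have -> : fadd f (fscale (delta eps) f) = fscale (1 + delta eps) f.
  by apply/funext => t; rewrite /fadd /fscale; lra.
rewrite !BFS_normZ // !ger0_norm ?addr_ge0 // => /(_ (lexx _)).
by rewrite ler_pM2r.
Qed.

End BanachFunctionSpace.

Section DisjointApproximation.
Context {d : measure_display} {T : measurableType d} {R : realType}.
Context {mu : {measure set T -> \bar R}} {X : set (T -> R)} {N : (T -> R) -> R}.
Context {delta : R -> R}.
Hypotheses (XN : is_BFS mu X N) (UM : unif_monotone_modulus mu X N delta).
Context {eps : R} {f1 f2 : T -> R}.
Hypotheses (eps_gt0 : 0 < eps) (Xf1 : X f1) (Xf2 : X f2).
Hypotheses (f1_ge0 : ae_nonneg mu f1) (f2_ge0 : ae_nonneg mu f2).
Hypothesis Nsum_le1 : N (fadd f1 f2) <= 1.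
Hypothesis Ndiff_ge : (1 + delta (eps / 3))^-1 <= N (fsub f1 f2).

Local Notation u := (fsub f1 f2)^\+.
Local Notation v := (fsub f1 f2)^\-.
Local Notation g := (f1 \min f2).
Local Notation a := (N (fsub f1 f2)).

Let eps3_gt0 : 0 < eps / 3. Proof. by rewrite divr_gt0. Qed.
Let Xf1f2 : X (fsub f1 f2). Proof. exact: (BFS_sub XN Xf1 Xf2). Qed.
Let Xuv : X (fadd u v).
Proof. exact: (BFS_add XN (BFS_funrpos XN Xf1f2) (BFS_funrneg XN Xf1f2)). Qed.
Let uv_ge0 : ae_nonneg mu (fadd u v).
Proof. by apply: aeW => x; rewrite /fadd addr_ge0 ?funrpos_ge0 ?funrneg_ge0. Qed.
Let Nuv : N (fadd u v) = a. Proof. exact: (BFS_norm_funrposDneg XN Xf1f2). Qed.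

Lemma norm_diff_gt0 : 0 < a.
Proof.
apply: lt_le_trans Ndiff_ge; have := (UM _ eps3_gt0).1.
by rewrite invr_gt0; lra.
Qed.

Lemma norm_diff_le1 : a <= 1.
Proof. exact: (le_trans (BFS_normB_le_normD XN Xf1 Xf2 f1_ge0 f2_ge0) Nsum_le1). Qed.

Lemma one_le_modulus_norm_diff : 1 <= (1 + delta (eps / 3)) * a.
Proof.
have D_gt0 := (UM _ eps3_gt0).1.
by rewrite -ler_pdivrMl ?mulr1 //; lra.
Qed.

Lemma modulus_third_le : delta (eps / 3) <= eps / 3.
Proof.
apply: (unif_monotone_modulus_le XN UM eps3_gt0 Xuv uv_ge0).
by rewrite Nuv norm_diff_gt0.
Qed.

(* f1 + f2 = (u + v) + 2 g, and its norm is at most 1 <= (1 + delta (eps/3)) a. *)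
Lemma norm_min_le : N g <= eps / 6 * a.
Proof.
have Xg := BFS_min XN Xf1 Xf2; have X2g := BFS_scale XN 2 Xg.
have g2_ge0 : ae_nonneg mu (fscale 2 g).
  by apply: filterS (ae_nonneg_min f1_ge0 f2_ge0) => x gx; rewrite /fscale mulr_ge0.
have := unif_monotone_homogeneous XN UM eps3_gt0 Xuv X2g uv_ge0 g2_ge0.
have -> : fadd (fadd u v) (fscale 2 g) = fadd f1 f2.
  apply/funext => x; rewrite /fadd /fscale.
  by have := funrpos_sub_add_min f1 f2 x; have := funrneg_sub_add_min f1 f2 x; lra.
rewrite Nuv (BFS_normZ XN _ Xg) ger0_norm //.
by move=> /(_ norm_diff_gt0 (le_trans Nsum_le1 one_le_modulus_norm_diff)); lra.
Qed.

(* ||w / a - (w + g)|| <= (1/a - 1) a + ||g|| = (1 - a) + ||g||, where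
   1 - a <= delta(eps/3) a <= eps a / 3 and ||g|| <= eps a / 6. *)
Let normalized_part_close w : X w -> N w <= a ->
  N (fsub (fscale a^-1 w) (fadd w g)) < eps.
Proof.
move=> Xw Nw; have a_gt0 := norm_diff_gt0.
apply: le_lt_trans (BFS_norm_scaleB XN _ Xw (BFS_min XN Xf1 Xf2)) _.
have Nw' : (a^-1 - 1) * N w <= 1 - a.
  have <- : (a^-1 - 1) * a = 1 - a by rewrite mulrBl mulVf ?gt_eqF // mul1r.
  by rewrite ler_wpM2l // subr_ge0 invf_ge1 // norm_diff_le1.
have Da : delta (eps / 3) * a <= eps / 3 * a by rewrite ler_pM2r // modulus_third_le.
have eps_a : eps * a <= eps := ler_piMr (ltW eps_gt0) norm_diff_le1.
have := one_le_modulus_norm_diff; have := norm_min_le.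
have := eps_gt0; rewrite ger0_norm ?subr_ge0 ?invf_ge1 ?norm_diff_le1 //; lra.
Qed.

Lemma normalized_funrpos_close : N (fsub (fscale a^-1 u) f1) < eps.
Proof.
have := normalized_part_close _ (BFS_funrpos XN Xf1f2) (BFS_norm_funrpos_le XN Xf1f2).
by congr (N (fsub _ _) < _); apply/funext => x; rewrite /fadd funrpos_sub_add_min.
Qed.

Lemma normalized_funrneg_close : N (fsub (fscale a^-1 v) f2) < eps.
Proof.
have := normalized_part_close _ (BFS_funrneg XN Xf1f2) (BFS_norm_funrneg_le XN Xf1f2).
by congr (N (fsub _ _) < _); apply/funext => x; rewrite /fadd funrneg_sub_add_min.
Qed.

Lemma norm_normalized_parts : N (fadd (fscale a^-1 u) (fscale a^-1 v)) = 1.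
Proof.
have -> : fadd (fscale a^-1 u) (fscale a^-1 v) = fscale a^-1 (fadd u v).
  by apply/funext => x; rewrite /fadd /fscale mulrDr.
rewrite (BFS_normZ XN _ Xuv) Nuv gtr0_norm ?invr_gt0 ?norm_diff_gt0 //.
by rewrite mulVf ?gt_eqF ?norm_diff_gt0.
Qed.

End DisjointApproximation.

Theorem lemma2p4 (d : measure_display) (T : measurableType d) (R : realType)
  (mu : {measure set T -> \bar R}) (X : set (T -> R)) (N : (T -> R) -> R)
  (delta : R -> R) (eps : R) (f1 f2 : T -> R) :
  is_BFS mu X N ->
  unif_monotone_modulus mu X N delta ->
  0 < eps -> eps < 1 ->
  X f1 -> X f2 -> ae_nonneg mu f1 -> ae_nonneg mu f2 ->
  N (fadd f1 f2) <= 1 ->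
  (1 + delta (eps / 3))^-1 <= N (fsub f1 f2) ->
  exists h1 h2 : T -> R,
    [/\ X h1, X h2, ae_nonneg mu h1 & ae_nonneg mu h2] /\
    [/\ {ae mu, forall x, h1 x = 0 \/ h2 x = 0},
        N (fadd h1 h2) = 1,
        N (fsub h1 f1) < eps &
        N (fsub h2 f2) < eps].
Proof.
move=> XN UM eps_gt0 _ Xf1 Xf2 f1_ge0 f2_ge0 Nsum_le1 Ndiff_ge.
have a_gt0 := norm_diff_gt0 UM eps_gt0 Ndiff_ge.
set a := N (fsub f1 f2) in a_gt0 *.
have a_ge0 : 0 <= a^-1 by rewrite invr_ge0 ltW.
have Xf1f2 := BFS_sub XN Xf1 Xf2.
exists (fscale a^-1 (fsub f1 f2)^\+), (fscale a^-1 (fsub f1 f2)^\-); split; split.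
- exact/(BFS_scale XN)/(BFS_funrpos XN).
- exact/(BFS_scale XN)/(BFS_funrneg XN).
- by apply: aeW => x; rewrite /fscale mulr_ge0 ?funrpos_ge0.
- by apply: aeW => x; rewrite /fscale mulr_ge0 ?funrneg_ge0.
- apply: aeW => x; rewrite /fscale.
  by case: (funrpos_funrneg_disjoint (fsub f1 f2) x) => ->; rewrite mulr0; [left|right].
- exact: (norm_normalized_parts XN UM eps_gt0 Xf1 Xf2 Ndiff_ge).
- exact: (normalized_funrpos_close XN UM eps_gt0 Xf1 Xf2 f1_ge0 f2_ge0 Nsum_le1).
- exact: (normalized_funrneg_close XN UM eps_gt0 Xf1 Xf2 f1_ge0 f2_ge0 Nsum_le1).
Qed.
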